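(* In the deterministic tandem system TSC(RO) with $n$ jobs, suppose there are nonnegative reals $\Gamma^j_{\min}(k),\Gamma^j_{\max}(k)$, $\Gamma_{\min}(k),\Gamma_{\max}(k)$ ($1\le j\le J$, $1\le k\le n$) such that the nonnegative interarrival and service times satisfy, for all $k=1,\dots,n$, $$\Gamma^j_{\min}(k)\le\sum_{i=k}^nV^j_i\le\Gamma^j_{\max}(k),\qquad \Gamma_{\min}(k)\le\sum_{i=k}^nU_i\le\Gamma_{\max}(k).$$ With the convention $\Gamma^j_{\min}(n+1)=\Gamma_{\min}(n+1)=0$, the sojourn time of job $n$ satisfies $$W_n\le\max_{n\ge k_J\ge\dots\ge k_1\ge1}\ \sum_{j=1}^{J-1}\big(\Gamma^j_{\max}(k_j)-\Gamma^j_{\min}(k_{j+1}+1)\big)+\Gamma^J_{\max}(k_J)-\Gamma_{\min}(k_1+1).$$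
   Context: TSC(RO): servers $S_1,\dots,S_J$ in tandem, initially empty, $n$ jobs; job $i$ arrives to $S_1$ at time $\sum_{l=1}^iU_l$; each server is FIFO, work-conserving, with infinite buffer; job $i$ needs service $V^j_i\ge0$ at $S_j$, then joins $S_{j+1}$, leaving after $S_J$. $W_n$ is the time between job $n$'s arrival at $S_1$ and its service completion at $S_J$. *)

From Stdlib Require Import Reals List Arith.
Open Scope R_scope.

(* sum_{i=a}^{b} f i  (empty, i.e. 0, when b < a) *)
Definition sumR (f : nat -> R) (a b : nat) : R :=
  fold_right (fun i acc => f i + acc) 0 (List.seq a (S b - a)).

(* Arrival time of job i at S_1: A_i = sum_{l=1}^i U_l  (A_0 = 0). *)
Definition arr (U : nat -> R) (i : nat) : R := sumR U 1 i.

(* Departure time of job i from server S_j (j >= 1), FIFO, work-conserving,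
   infinite buffer, initially empty system:
     D^0_i = A_i,  D^j_0 = 0,
     D^j_i = max(D^{j-1}_i, D^j_{i-1}) + V^j_i.
   V j i is the service time of job i at server S_j. *)
Fixpoint dep (U : nat -> R) (V : nat -> nat -> R) (j : nat) : nat -> R :=
  match j with
  | O => arr U
  | S j' =>
      fix d (i : nat) : R :=
        match i with
        | O => 0
        | S i' => Rmax (dep U V j' (S i')) (d i') + V (S j') (S i')
        end
  end.

Definition sojourn (U : nat -> R) (V : nat -> nat -> R) (J n : nat) : R :=
  dep U V J n - arr U n.

(* Unrolling the recursion D^j_i = max(D^(j-1)_i, D^j_(i-1)) + V^j_i shows that
   the departure time D^J_n is attained along a monotone lattice path
   1 <= k_1 <= ... <= k_J <= n: it is at most A_(k_1) + sum_j V^j_(k_j..k_(j+1))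
   with k_(J+1) = n.  Each segment sum V^j_(k_j..k_(j+1)) is a difference of tail
   sums, hence at most Gamma^j_max(k_j) - Gamma^j_min(k_(j+1)+1), and
   A_n - A_(k_1) is a tail sum of interarrival times, at least Gamma_min(k_1+1). *)
From Stdlib Require Import Reals List Arith Lra Lia.
Open Scope R_scope.

Lemma fold_sum_le (f g : nat -> R) (s : list nat) :
  (forall x, In x s -> f x <= g x) ->
  fold_right (fun i acc => f i + acc) 0 s <= fold_right (fun i acc => g i + acc) 0 s.
Proof.
  induction s as [|x s IHs]; simpl; intros Hfg; [lra|].
  apply Rplus_le_compat; auto.
Qed.

Lemma fold_sum_ge0 (f : nat -> R) (s : list nat) :
  (forall x, In x s -> 0 <= f x) -> 0 <= fold_right (fun i acc => f i + acc) 0 s.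
Proof.
  induction s as [|x s IHs]; simpl; intros Hf; [lra|].
  apply Rplus_le_le_0_compat; auto.
Qed.

Lemma fold_sum_acc (f : nat -> R) (c : R) (s : list nat) :
  fold_right (fun i acc => f i + acc) c s = fold_right (fun i acc => f i + acc) 0 s + c.
Proof. induction s as [|x s IHs]; simpl; [|rewrite IHs]; lra. Qed.

Lemma sumR_le (f g : nat -> R) (a b : nat) :
  (forall l, (a <= l <= b)%nat -> f l <= g l) -> sumR f a b <= sumR g a b.
Proof. intros Hfg; apply fold_sum_le; intros x Hx; apply in_seq in Hx; apply Hfg; lia. Qed.

Lemma sumR_ext (f g : nat -> R) (a b : nat) :
  (forall l, (a <= l <= b)%nat -> f l = g l) -> sumR f a b = sumR g a b.
Proof.
  intros Hfg; apply Rle_antisym; apply sumR_le; intros l Hl; rewrite Hfg by exact Hl; lra.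
Qed.

Lemma sumR_ge0 (f : nat -> R) (a b : nat) :
  (forall l, (a <= l <= b)%nat -> 0 <= f l) -> 0 <= sumR f a b.
Proof. intros Hf; apply fold_sum_ge0; intros x Hx; apply in_seq in Hx; apply Hf; lia. Qed.

Lemma sumR_empty (f : nat -> R) (a b : nat) : (b < a)%nat -> sumR f a b = 0.
Proof. intros; unfold sumR; replace (S b - a)%nat with 0%nat by lia; reflexivity. Qed.

Lemma sumR_single (f : nat -> R) (a : nat) : sumR f a a = f a.
Proof. unfold sumR; rewrite Nat.sub_succ_l, Nat.sub_diag by lia; simpl; lra. Qed.

Lemma sumR_snoc (f : nat -> R) (a b : nat) :
  (a <= S b)%nat -> sumR f a (S b) = sumR f a b + f (S b).
Proof.
  intros Hab; unfold sumR.
  replace (S (S b) - a)%nat with (S (S b - a)) by lia.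
  rewrite seq_S, fold_right_app, fold_sum_acc.
  replace (a + (S b - a))%nat with (S b) by lia; simpl; lra.
Qed.

Lemma sumR_split (f : nat -> R) (a m b : nat) :
  (a <= S m)%nat -> (m <= b)%nat -> sumR f a b = sumR f a m + sumR f (S m) b.
Proof.
  intros Ham; induction b as [|b IHb]; intros Hmb.
  - replace m with 0%nat by lia; rewrite (sumR_empty f 1 0) by lia; lra.
  - destruct (Nat.eq_dec m (S b)) as [->|Hm].
    + rewrite (sumR_empty f (S (S b))) by lia; lra.
    + rewrite !sumR_snoc, IHb by lia; lra.
Qed.

Lemma sumR_as_tails (f : nat -> R) (a b n : nat) :
  (a <= S b)%nat -> (b <= n)%nat -> sumR f a b = sumR f a n - sumR f (S b) n.
Proof. intros; rewrite (sumR_split f a b n) by lia; lra. Qed.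

Lemma tail_lower_bound_succ (f G : nat -> R) (n k : nat) :
  (forall k, (1 <= k <= n)%nat -> G k <= sumR f k n) -> G (S n) = 0 ->
  (k <= n)%nat -> G (S k) <= sumR f (S k) n.
Proof.
  intros HG HGn Hk; destruct (Nat.eq_dec k n) as [->|Hkn].
  - rewrite sumR_empty, HGn by lia; lra.
  - apply HG; lia.
Qed.

Lemma dep_succ (U : nat -> R) (V : nat -> nat -> R) (p i : nat) :
  dep U V (S p) (S i) = Rmax (dep U V p (S i)) (dep U V (S p) i) + V (S p) (S i).
Proof. reflexivity. Qed.

(* [k l] is the job at which the path enters server [l]. *)
Definition monotone_path (k : nat -> nat) (p i : nat) : Prop :=
  (1 <= k 1%nat)%nat /\ (forall l, (1 <= l <= p)%nat -> (k l <= k (S l))%nat) /\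
  (k (S p) <= i)%nat.

Definition path_extend (k : nat -> nat) (m i : nat) : nat -> nat :=
  fun l => if (l =? m)%nat then i else k l.

Lemma monotone_path_extend (k : nat -> nat) (p i : nat) :
  monotone_path k p i -> monotone_path (path_extend k (S (S p)) i) (S p) i.
Proof.
  unfold monotone_path, path_extend; intros (Hk1 & Hmono & Hlast); simpl.
  rewrite Nat.eqb_refl; split; [exact Hk1|split; [|lia]].
  intros l Hl; destruct (Nat.eqb_spec l (S (S p))); [lia|].
  destruct (Nat.eqb_spec l (S p)); [subst; exact Hlast|apply Hmono; lia].
Qed.

Lemma monotone_path_range (k : nat -> nat) (p i : nat) :
  monotone_path k p i -> forall l, (1 <= l <= S p)%nat -> (1 <= k l <= i)%nat.
Proof.
  intros (Hk1 & Hmono & Hlast).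
  assert (Hup : forall m l, (1 <= l <= m)%nat -> (m <= S p)%nat -> (k l <= k m)%nat).
  { induction m as [|m IHm]; intros l Hl Hm; [lia|].
    destruct (Nat.eq_dec l (S m)) as [->|]; [lia|].
    specialize (IHm l ltac:(lia) ltac:(lia)); specialize (Hmono m ltac:(lia)); lia. }
  intros l Hl; pose proof (Hup l 1%nat ltac:(lia) ltac:(lia));
    pose proof (Hup (S p) l ltac:(lia) ltac:(lia)); lia.
Qed.

Section Tandem.

Variables (U : nat -> R) (V : nat -> nat -> R) (J n : nat).
Hypothesis U_ge0 : forall i, (1 <= i <= n)%nat -> 0 <= U i.
Hypothesis V_ge0 : forall j i, (1 <= j <= J)%nat -> (1 <= i <= n)%nat -> 0 <= V j i.

(* The path runs through the [S p] servers 1..S p and leaves the last one at job [i]. *)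
Definition path_weight (p : nat) (k : nat -> nat) (i : nat) : R :=
  arr U (k 1%nat) + sumR (fun l => sumR (V l) (k l) (k (S l))) 1 p
  + sumR (V (S p)) (k (S p)) i.

Lemma path_weight_succ (p : nat) (k : nat -> nat) (i : nat) :
  (k (S p) <= S i)%nat -> path_weight p k (S i) = path_weight p k i + V (S p) (S i).
Proof. intros; unfold path_weight; rewrite sumR_snoc by lia; lra. Qed.

Lemma path_weight_extend (p : nat) (k : nat -> nat) (i : nat) :
  path_weight (S p) (path_extend k (S (S p)) i) i = path_weight p k i + V (S (S p)) i.
Proof.
  unfold path_weight, path_extend; simpl.
  rewrite Nat.eqb_refl, sumR_single, sumR_snoc by lia; simpl.
  rewrite Nat.eqb_refl; destruct (Nat.eqb_spec p (S p)); [lia|].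
  rewrite (sumR_ext _ (fun l => sumR (V l) (k l) (k (S l))) 1 p); [lra|].
  intros l Hl; destruct (Nat.eqb_spec l (S (S p))), (Nat.eqb_spec l (S p));
    [lia..|reflexivity].
Qed.

Lemma dep_ge0 (j i : nat) : (j <= J)%nat -> (i <= n)%nat -> 0 <= dep U V j i.
Proof.
  destruct j as [|j]; intros Hj Hi.
  - apply sumR_ge0; intros; apply U_ge0; lia.
  - induction i as [|i IHi]; [simpl; lra|].
    rewrite dep_succ; specialize (IHi ltac:(lia)).
    pose proof (Rmax_r (dep U V j (S i)) (dep U V (S j) i)).
    pose proof (V_ge0 (S j) (S i) ltac:(lia) ltac:(lia)); lra.
Qed.

(* Server [S p] either waits for job [i] to arrive from upstream, or for job
   [i - 1] to leave; in the latter case the path of job [i - 1] is prolonged. *)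
Lemma dep_le_path_step (p : nat) : (S p <= J)%nat ->
  (forall i, (1 <= i <= n)%nat -> exists k, monotone_path k p i /\
     dep U V p i + V (S p) i <= path_weight p k i) ->
  forall i, (1 <= i <= n)%nat -> exists k, monotone_path k p i /\
     dep U V (S p) i <= path_weight p k i.
Proof.
  intros Hp Hupstream; induction i as [|i IHi]; intros Hi; [lia|].
  rewrite dep_succ.
  destruct (Rle_dec (dep U V p (S i)) (dep U V (S p) i)) as [Hwait|Hwait];
    [rewrite Rmax_right by exact Hwait | rewrite Rmax_left by lra; apply Hupstream, Hi].
  destruct i as [|i].
  - pose proof (dep_ge0 p 1 ltac:(lia) ltac:(lia)).
    change (dep U V (S p) 0) with 0 in *; apply Hupstream in Hi as (k & Hk & Hw).
    exists k; split; [exact Hk|lra].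
  - destruct (IHi ltac:(lia)) as (k & Hk & Hw).
    destruct Hk as (Hk1 & Hmono & Hlast).
    exists k; split; [repeat split; auto|].
    rewrite path_weight_succ by lia; lra.
Qed.

Lemma dep_le_path (p : nat) : (S p <= J)%nat ->
  forall i, (1 <= i <= n)%nat -> exists k, monotone_path k p i /\
     dep U V (S p) i <= path_weight p k i.
Proof.
  induction p as [|p IHp]; intros Hp; apply dep_le_path_step; auto; intros i Hi.
  - exists (fun _ => i); split; [repeat split; lia|].
    unfold path_weight; rewrite sumR_empty, sumR_single by lia; simpl; lra.
  - destruct (IHp ltac:(lia) i Hi) as (k & Hk & Hw).
    exists (path_extend k (S (S p)) i); split; [apply monotone_path_extend, Hk|].
    rewrite path_weight_extend; lra.
Qed.

End Tandem.

Theorem theorem3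
  (J n : nat) (HJ : (1 <= J)%nat) (Hn : (1 <= n)%nat)
  (U : nat -> R) (V : nat -> nat -> R)
  (GVmin GVmax : nat -> nat -> R) (GUmin GUmax : nat -> R)
  (HU : forall i, (1 <= i <= n)%nat -> 0 <= U i)
  (HV : forall j i, (1 <= j <= J)%nat -> (1 <= i <= n)%nat -> 0 <= V j i)
  (HGV : forall j k, (1 <= j <= J)%nat -> (1 <= k <= n)%nat ->
           0 <= GVmin j k /\ 0 <= GVmax j k)
  (HGU : forall k, (1 <= k <= n)%nat -> 0 <= GUmin k /\ 0 <= GUmax k)
  (HVb : forall j k, (1 <= j <= J)%nat -> (1 <= k <= n)%nat ->
           GVmin j k <= sumR (V j) k n <= GVmax j k)
  (HUb : forall k, (1 <= k <= n)%nat ->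
           GUmin k <= sumR U k n <= GUmax k)
  (HconvV : forall j, (1 <= j <= J)%nat -> GVmin j (S n) = 0)
  (HconvU : GUmin (S n) = 0) :
  exists k : nat -> nat,
    (1 <= k 1%nat)%nat /\
    (forall j, (1 <= j < J)%nat -> (k j <= k (S j))%nat) /\
    (k J <= n)%nat /\
    sojourn U V J n <=
      sumR (fun j => GVmax j (k j) - GVmin j (S (k (S j)))) 1 (J - 1)
      + GVmax J (k J) - GUmin (S (k 1%nat)).
Proof.
  destruct J as [|p]; [lia|]; replace (S p - 1)%nat with p by lia.
  destruct (dep_le_path U V (S p) n HU HV p ltac:(lia) n ltac:(lia)) as (k & Hk & Hw).
  pose proof (monotone_path_range k p n Hk) as Hrange.
  destruct Hk as (Hk1 & Hmono & Hlast).
  exists k; split; [exact Hk1|split; [intros j Hj; apply Hmono; lia|split; [exact Hlast|]]].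
  assert (Harr : arr U n = arr U (k 1%nat) + sumR U (S (k 1%nat)) n)
    by (apply sumR_split; specialize (Hrange 1%nat); lia).
  assert (Hsegments : sumR (fun l => sumR (V l) (k l) (k (S l))) 1 p <=
                      sumR (fun j => GVmax j (k j) - GVmin j (S (k (S j)))) 1 p).
  { apply sumR_le; intros l Hl.
    pose proof (Hmono l Hl); pose proof (Hrange l ltac:(lia)); pose proof (Hrange (S l) ltac:(lia)).
    rewrite (sumR_as_tails _ _ _ n) by lia.
    pose proof (HVb l (k l) ltac:(lia) ltac:(lia)).
    pose proof (tail_lower_bound_succ (V l) (GVmin l) n (k (S l))
                  (fun m Hm => proj1 (HVb l m ltac:(lia) Hm)) (HconvV l ltac:(lia))
                  ltac:(lia)); lra. }
  pose proof (HVb (S p) (k (S p)) ltac:(lia) (Hrange (S p) ltac:(lia))).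
  pose proof (tail_lower_bound_succ U GUmin n (k 1%nat) (fun m Hm => proj1 (HUb m Hm)) HconvU
                (proj2 (Hrange 1%nat ltac:(lia)))).
  unfold sojourn, path_weight in *; lra.
Qed.
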